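(* Every projection of a sunword is a sunword; that is, the class of sunwords is closed under projection.
   Context: Multisuns: a multisun is a graph with no induced $K_4$ minus an edge, of odd order, whose maximal cliques of size $2$ form a Hamiltonian cycle $C$ (the rim); the other maximal cliques consist of pairwise nonconsecutive vertices of $C$ (inscribed cliques). A sub-multisun deletes the edge sets of some, but not all, inscribed cliques. An $AB$-path (inscribed cliques $A,B$, possibly equal) is a subpath of $C$ with one end in $A$, the other in $B$, internal vertices in no inscribed clique; $A$-path $=AA$-path; for $v\in B$ an $Av$-path is an $AB$-path ending at $v$ in $B$. N-conditions: (N1) every $A$-path has an even number $\ge4$ of vertices; (N2) inscribed cliques have odd size; (N3) all inscribed cliques share a vertex $\xi\in V(C)$ and are otherwise disjoint; (N4) every $A\xi$-path has an even number of vertices; (N5) for $A\ne B$ every $AB$-path has an odd number of vertices. A sunoid is a multisun such that it and all its sub-multisuns satisfy the N-conditions. Words: alphabet $\Sigma$ with distinguished letter $\epsilon$; the pattern $\pi(w)$ is obtained by repeatedly deleting $\epsilon\epsilon$; $v\sim w$ if related by cyclic shift and/or reversal; $u\approx v$ iff $\pi(u)\sim\pi(v)$; $[w]$ is the class (cyclic word). For a multisun satisfying the N-conditions, label rim vertices by $\sigma$ (in $\ge2$ inscribed cliques), a letter specific to $X$ (only in inscribed clique $X$), or $\epsilon$ (in none); reading around the rim gives $w_G$, and $[w_G]$ is its s-word. Letters other than $\epsilon,\sigma$ are proper letters. A sunword is the s-word of a sunoid. Projection: let $W=[w]$ be an s-word whose alphabet $\Sigma$ contains $p\ge2$ proper letters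 (so $\sigma\in\Sigma$), and let $\{x_1,\dots,x_q\}$ be proper letters with $q<p$. The word $w|_{x_1=\epsilon,\dots,x_q=\epsilon}$ is obtained from $w$ by replacing every occurrence of $x_1,\dots,x_q$ by $\epsilon$, and, if $q=p-1$, additionally replacing $\sigma$ by the unique remaining proper letter. The projection of $W$ on $\Sigma\setminus\{x_1,\dots,x_q\}$ is $W|_{x_1=\epsilon,\dots,x_q=\epsilon}=[w|_{x_1=\epsilon,\dots,x_q=\epsilon}]$ (independent of the representative). Projection is not defined for s-words with a single proper letter. *)

From mathcomp Require Import all_boot.
Set Implicit Arguments. Unset Strict Implicit. Unset Printing Implicit Defensive.

Section Graph.
Variables (V : finType) (adj : rel V).

Definition clique (K : {set V}) : bool :=
  [forall u in K, forall v in K, (u != v) ==> adj u v].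

Definition maxclique (K : {set V}) : bool :=
  clique K && [forall K' : {set V}, (K \proper K') ==> ~~ clique K'].

Definition rim_edge (K : {set V}) : bool := maxclique K && (#|K| == 2).

Definition inscribed : {set {set V}} :=
  [set K : {set V} | maxclique K & #|K| != 2].

Definition diamond_free : Prop :=
  ~ exists a b c d : V,
      [/\ uniq [:: a; b; c; d],
          [&& adj a b, adj a c, adj a d, adj b c & adj b d] & ~~ adj c d].

Definition in_inscribed (v : V) : bool := [exists K in inscribed, v \in K].

Definition sub_adj (D : {set {set V}}) : rel V :=
  fun u v => adj u v && ~~ [exists K in D, (u \in K) && (v \in K)].

Definition sub_choice (D : {set {set V}}) : Prop :=
  [/\ D \subset inscribed, D != set0 & D != inscribed].

End Graph.

(* Graphs on 'I_n; the rim is described by a cyclic ordering           *)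
(* c : 'I_n -> 'I_n, the i-th rim vertex being c i, followed by        *)
(* c (ordS i).                                                         *)
Section OnOrd.
Variable n : nat.
Implicit Types (adj : rel 'I_n) (c : 'I_n -> 'I_n).

Definition rim_order adj c : Prop :=
  [/\ 3 <= n, injective c &
      forall K : {set 'I_n},
        rim_edge adj K = [exists i : 'I_n, K == [set c i; c (ordS i)]]].

Definition multisun adj : Prop :=
  [/\ symmetric adj /\ irreflexive adj, odd n, diamond_free adj,
      exists c, rim_order adj c &
      forall K, K \in inscribed adj -> forall u v, u \in K -> v \in K ->
        u != v -> ~~ rim_edge adj [set u; v]].

Definition rv c (i : 'I_n) (j : nat) : 'I_n := c (iter j (@ordS n) i).

(* the subpath of C from rv c i 0 to rv c i k (k edges, k+1 vertices)
   whose internal vertices lie in no inscribed clique *)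
Definition clean_path adj c (i : 'I_n) (k : nat) : Prop :=
  [/\ 0 < k, k < n &
      forall j, 0 < j -> j < k -> ~~ in_inscribed adj (rv c i j)].

Definition N1 adj c : Prop :=
  forall A, A \in inscribed adj -> forall i k, clean_path adj c i k ->
    rv c i 0 \in A -> rv c i k \in A -> ~~ odd k.+1 /\ 4 <= k.+1.

Definition N2 adj : Prop :=
  forall A, A \in inscribed adj -> odd #|A|.

Definition N3 adj (xi : 'I_n) : Prop :=
  (forall A, A \in inscribed adj -> xi \in A) /\
  (forall A B, A \in inscribed adj -> B \in inscribed adj -> A != B ->
     A :&: B = [set xi]).

Definition N4 adj c (xi : 'I_n) : Prop :=
  forall A, A \in inscribed adj -> forall i k, clean_path adj c i k ->
    (rv c i 0 \in A /\ rv c i k = xi) \/ (rv c i 0 = xi /\ rv c i k \in A) ->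
    ~~ odd k.+1.

Definition N5 adj c : Prop :=
  forall A B, A \in inscribed adj -> B \in inscribed adj -> A != B ->
  forall i k, clean_path adj c i k ->
    (rv c i 0 \in A :\: B /\ rv c i k \in B :\: A) \/
    (rv c i 0 \in B :\: A /\ rv c i k \in A :\: B) ->
    odd k.+1.

Definition Nconds adj c : Prop :=
  [/\ N1 adj c, N2 adj, exists xi, N3 adj xi /\ N4 adj c xi & N5 adj c].

Definition sunoid adj : Prop :=
  multisun adj /\
  forall c, rim_order adj c ->
    Nconds adj c /\
    forall D, sub_choice adj D -> Nconds (sub_adj adj D) c.

End OnOrd.

(* Words.  Letters: None = epsilon, Some None = sigma,                 *)
(* Some (Some m) = proper letter number m.                             *)
Definition letter := option (option nat).
Definition Eps : letter := None.
Definition Sig : letter := Some None.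
Definition Pl (m : nat) : letter := Some (Some m).

Definition is_proper (l : letter) : bool :=
  if l is Some (Some _) then true else false.

Fixpoint del_ee (w : seq letter) : seq letter :=
  match w with
  | None :: None :: t => t
  | x :: t => x :: del_ee t
  | [::] => [::]
  end.

Definition pattern (w : seq letter) : seq letter := iter (size w) del_ee w.

Definition sim (v w : seq letter) : Prop :=
  exists k, w = rot k v \/ w = rot k (rev v).

Definition approx (u v : seq letter) : Prop := sim (pattern u) (pattern v).

Definition label n (adj : rel 'I_n) (name : {set 'I_n} -> nat) (v : 'I_n)
  : letter :=
  let S := [set K in inscribed adj | v \in K] in
  if 2 <= #|S| then Sig else
  if [pick K in S] is Some K then Pl (name K) else Eps.

Definition wordG n (adj : rel 'I_n) (c : 'I_n -> 'I_n)
  (name : {set 'I_n} -> nat) : seq letter :=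
  [seq label adj name (c i) | i <- enum 'I_n].

(* w represents a sunword: [w] is the s-word of some sunoid (for some
   reading of its rim and some naming of its inscribed cliques) *)
Definition is_sunword (w : seq letter) : Prop :=
  exists n (adj : rel 'I_n) (c : 'I_n -> 'I_n) (name : {set 'I_n} -> nat),
    [/\ sunoid adj, rim_order adj c, {in inscribed adj &, injective name}
      & approx (wordG adj c name) w].

Definition proper_letters (w : seq letter) : seq letter :=
  undup [seq l <- w | is_proper l].
Definition nproper (w : seq letter) : nat := size (proper_letters w).

Definition proj (w : seq letter) (X : seq letter) : seq letter :=
  let rem := head Eps [seq l <- proper_letters w | l \notin X] in
  [seq (if l \in X then Eps
        else if (size X == (nproper w).-1) && (l == Sig) then rem else l)
   | l <- w].

(* Deleting from a sunoid the inscribed cliques named by the letters of X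
   leaves a sub-multisun with the same rim, and it is again a sunoid because
   its own sub-multisuns are sub-multisuns of the original.  By N3 every
   inscribed clique has a private rim vertex and only xi lies in several
   cliques, so relabelling the rim after the deletion is exactly the letter
   substitution of the projection (sigma becomes the surviving letter when a
   single clique is left).  Finally the epsilon-cancellation defining
   patterns commutes with any substitution fixing epsilon, up to rotating
   the word, and a rotation is realised by reading the rim from another
   vertex. *)

From mathcomp Require Import all_boot zify.
From Stdlib Require Import FunctionalExtensionality.
Set Implicit Arguments. Unset Strict Implicit. Unset Printing Implicit Defensive.

(* [reduce] computes the pattern by a single right-to-left pass, pushing
   letters onto an already reduced word and cancelling adjacent epsilons. *)
Definition econs (a : letter) (r : seq letter) : seq letter :=
  if a is None then (if r is None :: r' then r' else None :: r) else a :: r.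

Arguments econs : simpl never.

Fixpoint reduce (w : seq letter) : seq letter :=
  if w is a :: t then econs a (reduce t) else [::].

Fixpoint reduced (w : seq letter) : bool :=
  match w with
  | None :: None :: _ => false
  | _ :: t => reduced t
  | [::] => true
  end.

Lemma reduced_cons a t : reduced (a :: t) -> reduced t.
Proof. by case: a => [a|] //=; case: t => [|[b|] t]. Qed.

Lemma reduced_consE a t :
  reduced (a :: t) = reduced t && ~~ ((a == None) && (head Sig t == None)).
Proof.
by case: a => [a|] /=; rewrite ?andbT //; case: t => [|[b|] t] //=; rewrite ?andbT ?andbF.
Qed.

Lemma reduced_rcons s a :
  reduced (rcons s a) = reduced s && ~~ ((a == None) && (last Sig s == None)).
Proof.
elim: s => [|b s IH]; first by case: a.
rewrite rcons_cons reduced_consE IH reduced_consE.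
case: s IH => [|c s] IH; first by clear IH; case: a => [a|]; case: b => [b|].
by rewrite rcons_cons /= -!andbA [X in _ && X]andbC.
Qed.

Lemma reduced_rev w : reduced w -> reduced (rev w).
Proof.
elim: w => // a t IH H.
have last_rev : last Sig (rev t) = head Sig t.
  by case: t {IH H} => // b t; rewrite rev_cons last_rcons.
rewrite rev_cons reduced_rcons last_rev IH ?(reduced_cons H) //=.
by move: H; rewrite reduced_consE => /andP[].
Qed.

Lemma reduce_reduced w : reduced (reduce w).
Proof.
elim: w => //= a t IH; case: a => [a|] /=.
  by case: (reduce t) IH => [|[b|] r].
by case: (reduce t) IH => [|[b|] r] // H; apply: reduced_cons H.
Qed.

Lemma reduce_id w : reduced w -> reduce w = w.
Proof.
elim: w => //= a t IH H; rewrite IH ?(reduced_cons H) //.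
by case: a H => [a|] //=; case: t {IH} => [|[b|] t].
Qed.

Lemma reduceK w : reduce (reduce w) = reduce w.
Proof. exact/reduce_id/reduce_reduced. Qed.

Lemma econs_epsK r : reduced r -> econs Eps (econs Eps r) = r.
Proof. by case: r => [|[b|] [|[c|] r]]. Qed.

Lemma reduce_del_ee w : reduce (del_ee w) = reduce w.
Proof.
elim: w => //= a t IH; case: a => [a|] /=; first by rewrite IH.
case: t IH => [|[b|] t] //= IH; first by rewrite IH.
by rewrite econs_epsK //; apply: reduce_reduced.
Qed.

Lemma del_ee_id w : reduced w -> del_ee w = w.
Proof.
elim: w => //= a t IH; case: a => [a|] /= H.
  by rewrite IH // (reduced_cons H).
by case: t IH H => [|[b|] t] //= IH H; rewrite IH.
Qed.

Lemma size_del_ee w : ~~ reduced w -> (size (del_ee w)).+2 = size w.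
Proof.
elim: w => //= a t IH; case: a => [a|] /= H; first by rewrite IH.
by case: t IH H => [|[b|] t] //= IH H; rewrite IH.
Qed.

(* Each non-trivial step of [del_ee] shortens the word by two, so [size w]
   iterations reach the reduced normal form. *)
Lemma iter_del_ee k w : size w <= k -> iter k del_ee w = reduce w.
Proof.
elim: k w => [|k IH] w Hs; first by case: w Hs.
rewrite iterSr; case R: (reduced w).
  rewrite del_ee_id // reduce_id //.
  by elim: k {IH Hs} => //= k ->; rewrite del_ee_id.
by rewrite IH ?reduce_del_ee //; have := size_del_ee (negbT R); lia.
Qed.

Lemma pattern_reduce w : pattern w = reduce w.
Proof. exact: iter_del_ee. Qed.

Lemma reduce_catr x y : reduce (x ++ y) = reduce (x ++ reduce y).
Proof. by elim: x => [|a x /= ->] /=; rewrite ?reduceK. Qed.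

Lemma reduce_catl x y : reduce (x ++ y) = reduce (reduce x ++ y).
Proof.
elim: x => [|[a|] x IH] //=; rewrite IH //.
case: (reduce x) (reduce_reduced x) => [|[b|] r] //= Hr.
by rewrite -/(econs Eps (econs Eps (reduce (r ++ y)))) econs_epsK ?reduce_reduced.
Qed.

Lemma reduce_cat x y : reduce (x ++ y) = reduce (reduce x ++ reduce y).
Proof. by rewrite reduce_catl reduce_catr. Qed.

Lemma reduce_map_reduce (f : letter -> letter) w : f Eps = Eps ->
  reduce (map f w) = reduce (map f (reduce w)).
Proof.
move=> f0; elim: w => //= a w IH.
case: a => [a|] /=; first by rewrite IH.
rewrite f0 /= IH.
case: (reduce w) (reduce_reduced w) => [|[b|] r] Hr /=; rewrite /econs /= f0 //.
by rewrite -/(econs Eps (econs Eps _)) econs_epsK ?reduce_reduced.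
Qed.

Lemma mem_reduce w l : l != Eps -> (l \in reduce w) = (l \in w).
Proof.
move=> Hl; elim: w => //= a w IH.
case: a => [a|] /=; first by rewrite /econs !in_cons IH.
rewrite in_cons (negbTE Hl) /= -IH /econs.
by case: (reduce w) => [|[b|] r] //; rewrite !in_cons (negbTE Hl).
Qed.

Lemma reduce_rev w : reduce (rev w) = rev (reduce w).
Proof.
elim: w => // a w IH.
rewrite rev_cons -cats1 reduce_catl IH /=.
have Hr := reduce_reduced w.
have Hg := reduce_reduced (a :: w); rewrite /= in Hg.
case E: (econs a (reduce w) == a :: reduce w).
  by rewrite (eqP E) in Hg *; rewrite cats1 -rev_cons reduce_id ?reduced_rev.
move: E Hg; rewrite /econs; case: a => [a|]; first by rewrite eqxx.
case: (reduce w) Hr => [|[b|] r] Hr; rewrite ?eqxx // => _ Hg.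
rewrite rev_cons -cats1 -catA /= reduce_catr /= cats0.
by rewrite reduce_id // reduced_rev // (reduced_cons Hr).
Qed.

Lemma reduce_split w s1 s2 : reduce w = s1 ++ s2 ->
  exists w1 w2, [/\ w = w1 ++ w2, reduce w1 = s1 & reduce w2 = s2].
Proof.
elim: w s1 s2 => [|x t IH] s1 s2 /=.
  by case: s1 => //; case: s2 => // _; exists [::], [::].
case: s1 => [|y s1] /=; first by move=> <-; exists [::], (x :: t).
case: x => [x|] /=.
  rewrite {1}/econs => -[<- /IH [t1 [t2 [-> H1 H2]]]].
  by exists (Some x :: t1), t2; rewrite /= H1.
rewrite /econs; case E: (reduce t) => [|[b|] r].
- case=> <- Hs; exists [:: None], t; split => //; first by case: s1 Hs.
  by rewrite E; case: s1 Hs => //; case: s2.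
- case=> <- Hs; have [t1 [t2 [-> H1 H2]]] := IH s1 s2 (etrans E Hs).
  exists (None :: t1), t2; split => //=; rewrite H1 /econs.
  by case: s1 Hs {H1} => [|[c|] s1] // [<-].
- move=> Hs.
  have [t1 [t2 [-> H1 H2]]] := IH [:: None, y & s1] s2 ltac:(by rewrite E Hs).
  by exists (None :: t1), t2; rewrite /= H1 /econs.
Qed.

Lemma reduce_rot w k : exists m, reduce (rot k (reduce w)) = reduce (rot m w).
Proof.
have [w1 [w2 [Ew H1 H2]]] := reduce_split (esym (cat_take_drop k (reduce w))).
by exists (size w1); rewrite {2}Ew rot_size_cat reduce_cat H1 H2.
Qed.

Lemma approx_map_rot (f : letter -> letter) u w : f Eps = Eps -> approx u w ->
  exists m, approx (rot m (map f u)) (map f w).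
Proof.
rewrite /approx !pattern_reduce => f0 [k [Hw|Hw]].
  have [m Hm] := reduce_rot u k.
  exists m; rewrite /approx !pattern_reduce; exists 0; left.
  rewrite rot0 reduce_map_reduce // Hw [LHS]reduce_map_reduce // Hm.
  by rewrite -reduce_map_reduce // map_rot.
have [m Hm] := reduce_rot u (size (reduce u) - k).
exists m; rewrite /approx !pattern_reduce; exists 0; right.
have Hrev : reduce (rev w) = rot (size (reduce u) - k) (reduce u).
  by rewrite reduce_rev Hw rev_rot revK.
apply: (can_inj revK); rewrite rot0 revK -reduce_rev -map_rev reduce_map_reduce // Hrev.
by rewrite [LHS]reduce_map_reduce // Hm -reduce_map_reduce // map_rot.
Qed.

Lemma mem_approx u w l : l != Eps -> approx u w -> (l \in w) = (l \in u).
Proof.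
rewrite /approx !pattern_reduce => Hl [k [H|H]].
  by rewrite -(mem_reduce w Hl) H mem_rot mem_reduce.
by rewrite -(mem_reduce w Hl) H mem_rot mem_rev mem_reduce.
Qed.

Definition proj_letter (w X : seq letter) (l : letter) : letter :=
  if l \in X then Eps
  else if (size X == (nproper w).-1) && (l == Sig)
       then head Eps [seq l <- proper_letters w | l \notin X] else l.

Lemma proj_map w X : proj w X = map (proj_letter w X) w.
Proof. by []. Qed.

Lemma proj_letter_Eps w X : {subset X <= proper_letters w} -> proj_letter w X Eps = Eps.
Proof.
move=> X_proper; rewrite /proj_letter andbF.
by case: ifP => // /X_proper; rewrite mem_undup mem_filter.
Qed.

(* For [nproper w = 1] the empty projection would rename [sigma]. *)
Lemma proj_nil w : 2 <= nproper w -> proj w [::] = w.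
Proof.
move=> w2; rewrite proj_map /proj_letter -[RHS]map_id; apply: eq_map => l /=.
by case: (nproper w) w2 => [|[|p]].
Qed.

Section Cliques.
Variable V : finType.
Implicit Types (adj : rel V) (K M : {set V}).

Lemma cliqueP adj K :
  reflect {in K &, forall u v, u != v -> adj u v} (clique adj K).
Proof.
apply: (iffP forallP) => [H u v Hu Hv|H u].
  by move/implyP: (H u) => /(_ Hu) /forallP /(_ v) /implyP /(_ Hv) /implyP.
by apply/implyP => Hu; apply/forallP => v; apply/implyP => Hv; apply/implyP; apply: H.
Qed.

Lemma maxcliqueP adj K : maxclique adj K <->
  clique adj K /\ forall K' : {set V}, K \proper K' -> ~~ clique adj K'.
Proof.
split; first by case/andP => H1 /forallP H2; split => // K'; apply/implyP.
by case=> H1 H2; rewrite /maxclique H1; apply/forallP => K'; apply/implyP; apply: H2.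
Qed.

Lemma maxclique_sup adj K :
  clique adj K -> exists2 M, maxclique adj M & K \subset M.
Proof.
move=> HK; pose P M := clique adj M && (K \subset M).
have PK : P K by rewrite /P HK subxx.
case: (@arg_maxnP _ K P (fun M => #|M|) PK) => M /andP[HM KM] Mmax.
exists M => //; apply/maxcliqueP; split => // K' MK'; apply/negP => HK'.
have := Mmax K'; rewrite /P HK' (subset_trans KM (proper_sub MK')) => /(_ isT).
by have := proper_card MK'; lia.
Qed.

End Cliques.

Section DiamondFree.
Variables (V : finType) (adj : rel V).
Implicit Types K M : {set V}.
Hypothesis adjC : symmetric adj.
Hypothesis adj_dfree : diamond_free adj.

(* Were [K1 != K2], some [a] of [K1 \ K2] has a non-neighbour [x] in [K2]
   by maximality of [K2], and [u, v, a, x] would induce a diamond. *)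
Lemma maxclique_eq (K1 K2 : {set V}) u v :
  maxclique adj K1 -> maxclique adj K2 -> u \in K1 -> v \in K1 ->
  u \in K2 -> v \in K2 -> u != v -> K1 = K2.
Proof.
move=> /maxcliqueP [/cliqueP C1 M1] /maxcliqueP [C2 M2] u1 v1 u2 v2 uv.
apply/eqP; apply/negPn/negP => N12.
have [a a1 a2] : exists2 a, a \in K1 & a \notin K2.
  apply/subsetPn/negP => S.
  have : K1 \proper K2 by rewrite properEneq N12 S.
  by move/M1; rewrite C2.
have [x x2 xa] : exists2 x, x \in K2 & ~~ adj a x.
  case E: [exists x in K2, ~~ adj a x]; first by case/exists_inP: E => x; exists x.
  exfalso; move/negbT/exists_inPn: E => E.
  have /M2/negP : K2 \proper a |: K2.
    by rewrite properUr // sub1set.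
  apply; apply/cliqueP => y z; move/cliqueP: C2 => C2.
  rewrite !inE => /predU1P[->|y2] /predU1P[->|z2]; rewrite ?eqxx // => yz.
  - by have := E z z2; rewrite negbK.
  - by rewrite adjC; have := E y y2; rewrite negbK.
  - exact: C2 yz.
have ua : u != a by apply: contraNneq a2 => <-.
have va : v != a by apply: contraNneq a2 => <-.
have ax : a != x by apply: contraNneq a2 => ->.
have ux : u != x by apply: contraNneq xa => <-; rewrite adjC C1 // eq_sym.
have vx : v != x by apply: contraNneq xa => <-; rewrite adjC C1 // eq_sym.
move/cliqueP: C2 => C2.
apply: adj_dfree; exists u, v, a, x; split => //.
  by rewrite /= !inE !negb_or uv ua ux va vx ax.
by rewrite (C1 u v) ?(C1 u a) ?(C1 v a) ?(C2 u x) ?(C2 v x).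
Qed.

Variable D : {set {set V}}.
Hypothesis D_inscribed : D \subset inscribed adj.

Lemma clique_sub_adj (K : {set V}) : clique (sub_adj adj D) K -> clique adj K.
Proof.
move/cliqueP => H; apply/cliqueP => u v Hu Hv Huv.
by case/andP: (H u v Hu Hv Huv).
Qed.

Lemma maxclique_notin_clique_sub_adj (M : {set V}) :
  maxclique adj M -> M \notin D -> clique (sub_adj adj D) M.
Proof.
move=> HM MD; have [/cliqueP CM _] := (maxcliqueP adj M).1 HM.
apply/cliqueP => u v Hu Hv Huv; rewrite /sub_adj CM //=.
apply/negP => /exists_inP [K KD /andP[uK vK]].
have /setIdP [KM _] := subsetP D_inscribed _ KD.
by rewrite (maxclique_eq HM KM Hu Hv uK vK Huv) KD in MD.
Qed.

(* Both edges [ac] and [ad] survive, so if [cd] was removed with some [K] in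
   [D], the maximal clique through [a, c, d] meets [K] in [c, d], hence is [K],
   and [ac] would have been removed as well. *)
Lemma sub_adj_diamond_free : diamond_free (sub_adj adj D).
Proof.
case=> a [b [c [d [U /and5P[ab ac ad bc bd] ncd]]]].
have sub x y : sub_adj adj D x y -> adj x y by case/andP.
move: (U); rewrite /= !inE !negb_or => /and4P[/and3P[_ nac nad] _ ncd' _].
case Acd: (adj c d); last first.
  apply: adj_dfree; exists a, b, c, d; split; rewrite ?Acd //.
  by rewrite !sub.
move: ncd; rewrite /sub_adj Acd negbK => /exists_inP [K KD /andP[cK dK]].
have Tacd : clique adj [set a; c; d].
  apply/cliqueP => x y; rewrite !inE.
  move=> /orP[/orP[]|]/eqP-> /orP[/orP[]|]/eqP->; rewrite ?eqxx // => _;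
    by rewrite ?(sub _ _ ac) ?(sub _ _ ad) ?Acd // adjC ?(sub _ _ ac) ?(sub _ _ ad) ?Acd.
have [M HM TM] := maxclique_sup Tacd.
have /setIdP [KM _] := subsetP D_inscribed _ KD.
have inM x : x \in [set a; c; d] -> x \in M by apply: (subsetP TM).
have [aM cM dM] : [/\ a \in M, c \in M & d \in M] by split; apply: inM; rewrite !inE eqxx ?orbT.
have EM := maxclique_eq HM KM cM dM cK dK ncd'.
move: ac; rewrite /sub_adj => /andP[_ /exists_inP]; apply; exists K => //.
by rewrite -EM aM cM.
Qed.

Variable v0 : V.
Hypothesis rim_cover : forall v, exists2 M, rim_edge adj M & v \in M.

Lemma rim_edge_proper K : #|K| <= 1 -> exists2 M, rim_edge adj M & K \proper M.
Proof.
move=> K1; have [v Kv] : exists v, K \subset [set v].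
  case: (set_0Vmem K) => [->|[v vK]]; first by exists v0; apply: sub0set.
  exists v; apply/subsetP => y yK; rewrite inE; apply/negPn/negP => yv.
  have : 1 < #|K| by apply/card_gt1P; exists y, v.
  by rewrite ltnNge K1.
have [M /andP[HM /eqP M2] vM] := rim_cover v.
exists M; first by rewrite /rim_edge HM M2.
rewrite properEcard (subset_trans Kv) ?sub1set // M2.
by apply: leq_ltn_trans K1 _.
Qed.

Lemma maxclique_card_gt1 K : maxclique adj K -> 1 < #|K|.
Proof.
case/maxcliqueP => _ Kmax; rewrite ltnNge; apply/negP => /rim_edge_proper [M].
by case/andP => /maxcliqueP[CM _] _ /Kmax; rewrite CM.
Qed.

Lemma maxclique_sub_adj K :
  maxclique (sub_adj adj D) K = maxclique adj K && (K \notin D).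
Proof.
have rim_notin M : rim_edge adj M -> M \notin D.
  by case/andP=> _ M2; apply/negP => /(subsetP D_inscribed); rewrite inE M2 andbF.
apply/idP/idP; last first.
  case/andP => HK KD; have [_ Kmax] := (maxcliqueP adj K).1 HK.
  apply/maxcliqueP; split; first exact: maxclique_notin_clique_sub_adj.
  by move=> K' /Kmax; apply: contra; apply: clique_sub_adj.
case/maxcliqueP => CK Kmax.
case: (leqP #|K| 1) => [/rim_edge_proper [M RM KM]|/card_gt1P [a [b [aK bK ab]]]].
  have /andP[HM _] := RM.
  by have := Kmax _ KM; rewrite (maxclique_notin_clique_sub_adj HM (rim_notin _ RM)).
have [M HM KM] := maxclique_sup (clique_sub_adj CK).
have MD : M \notin D.
  apply/negP => MD; have := (cliqueP _ _ CK) a b aK bK ab.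
  by rewrite /sub_adj => /andP[_ /exists_inP]; apply; exists M; rewrite // !(subsetP KM).
have CM := maxclique_notin_clique_sub_adj HM MD.
suff -> : K = M by rewrite HM MD.
apply/eqP; rewrite eqEproper KM /=; apply/negP => /Kmax.
by rewrite CM.
Qed.

End DiamondFree.

Section RimReading.
Variable n : nat.

Section RimOrder.
Variables (adj : rel 'I_n) (c : 'I_n -> 'I_n).
Hypothesis adj_rim : rim_order adj c.

Lemma rim_order_gt0 : 0 < n.
Proof. by case: adj_rim => n3 _ _; apply: leq_trans n3. Qed.

Lemma rim_order_surj v : exists i, v = c i.
Proof.
case: adj_rim => _ c_inj _; have [g _ gK] := injF_bij c_inj.
by exists (g v); rewrite gK.
Qed.

Lemma rim_cover v : exists2 M, rim_edge adj M & v \in M.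
Proof.
have [i ->] := rim_order_surj v; case: adj_rim => _ _ Hr.
exists [set c i; c (ordS i)]; last by rewrite !inE eqxx.
by rewrite Hr; apply/existsP; exists i.
Qed.

End RimOrder.

Lemma val_iter_ordS (i : 'I_n) m : val (iter m (@ordS n) i) = (i + m) %% n.
Proof.
elim: m => [|m IH] /=; first by rewrite addn0 modn_small.
by rewrite IH -addn1 modnDml -addnA addn1.
Qed.

Lemma iter_ordS_inj m : injective (iter m (@ordS n)).
Proof. by elim: m => [|m IH] x y //= /ordS_inj; apply: IH. Qed.

Lemma nth_rot_mod (T : Type) (x0 : T) (s : seq T) m j :
  m <= size s -> j < size s -> nth x0 (rot m s) j = nth x0 s ((j + m) %% size s).
Proof.
move=> Hm Hj; rewrite /rot nth_cat size_drop; case: ltnP => H.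
  by rewrite nth_drop modn_small 1?addnC //; lia.
have -> : j + m = (j - (size s - m)) + size s by lia.
by rewrite modnDr modn_small ?nth_take //; lia.
Qed.

Lemma map_iter_ordS (T : Type) (g : 'I_n -> T) m : 0 < n -> m <= n ->
  [seq g (iter m (@ordS n) i) | i <- enum 'I_n] = rot m [seq g i | i <- enum 'I_n].
Proof.
move=> n0 Hm; set i0 := Ordinal n0.
have Sz : size [seq g i | i <- enum 'I_n] = n by rewrite size_map size_enum_ord.
apply: (@eq_from_nth _ (g i0)); first by rewrite size_rot !size_map.
rewrite size_map size_enum_ord => j Hj.
rewrite (nth_map i0) ?size_enum_ord // nth_rot_mod ?Sz //.
rewrite (nth_map i0) ?size_enum_ord ?ltn_pmod //.
congr g; apply: val_inj; rewrite val_iter_ordS !nth_enum_ord //.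
exact/esym/nth_enum_ord/ltn_pmod.
Qed.

Lemma rim_order_shift (adj : rel 'I_n) c m :
  rim_order adj c -> rim_order adj (fun i => c (iter m (@ordS n) i)).
Proof.
case=> n3 c_inj Hrim; split => // [x y /c_inj /iter_ordS_inj //|K].
rewrite Hrim; have [g gK Kg] := injF_bij (@iter_ordS_inj m).
have iterS_ordS i : iter m (@ordS n) (ordS i) = ordS (iter m (@ordS n) i).
  by rewrite -iterSr iterS.
apply/existsP/existsP => [[j Hj]|[i Hi]].
  by exists (g j); rewrite iterS_ordS Kg.
by exists (iter m (@ordS n) i); rewrite -iterS_ordS.
Qed.

Lemma rot_wordG (adj : rel 'I_n) c name m : rim_order adj c ->
  exists2 c', rim_order adj c' & wordG adj c' name = rot m (wordG adj c name).
Proof.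
move=> Hc; case: (leqP m n) => Hmn.
  exists (fun i => c (iter m (@ordS n) i)); first exact: rim_order_shift.
  exact: (map_iter_ordS (fun i => label adj name (c i)) (rim_order_gt0 Hc)).
by exists c; rewrite // rot_oversize // size_map size_enum_ord ltnW.
Qed.

End RimReading.

Lemma sub_adjU (V : finType) (adj : rel V) (D D' : {set {set V}}) :
  sub_adj (sub_adj adj D) D' = sub_adj adj (D :|: D').
Proof.
apply: functional_extensionality => x; apply: functional_extensionality => y.
rewrite /sub_adj -andbA -negb_or; congr (_ && ~~ _).
apply/orP/exists_inP => [[]/exists_inP[K KD H]|[K]].
- by exists K; rewrite // inE KD.
- by exists K; rewrite // inE KD orbT.
- by rewrite inE => /orP[KD|KD] H; [left|right]; apply/exists_inP; exists K.
Qed.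

Lemma rim_order_ext n (adj1 adj2 : rel 'I_n) c :
  rim_edge adj1 =1 rim_edge adj2 -> rim_order adj1 c -> rim_order adj2 c.
Proof. by move=> E [H1 H2 H3]; split => // K; rewrite -E. Qed.

Section SubMultisun.
Variables (n : nat) (adj : rel 'I_n) (c : 'I_n -> 'I_n) (D : {set {set 'I_n}}).
Hypotheses (adj_multisun : multisun adj) (adj_rim : rim_order adj c)
  (D_inscribed : D \subset inscribed adj).

Lemma multisun_sym : symmetric adj. Proof. by case: adj_multisun => [[]]. Qed.

Lemma multisun_diamond_free : diamond_free adj. Proof. by case: adj_multisun. Qed.

Lemma maxclique_sub_adj_multisun K :
  maxclique (sub_adj adj D) K = maxclique adj K && (K \notin D).
Proof.
exact: (maxclique_sub_adj multisun_sym multisun_diamond_free D_inscribed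
          (Ordinal (rim_order_gt0 adj_rim)) (rim_cover adj_rim)).
Qed.

Lemma rim_edge_sub_adj : rim_edge (sub_adj adj D) =1 rim_edge adj.
Proof.
move=> K; rewrite /rim_edge maxclique_sub_adj_multisun.
case K2: (#|K| == 2); rewrite ?andbF ?andbT //; case: (maxclique adj K) => //=.
by apply/negP => /(subsetP D_inscribed); rewrite inE K2 andbF.
Qed.

Lemma inscribed_sub_adj : inscribed (sub_adj adj D) = inscribed adj :\: D.
Proof.
apply/setP => K; rewrite !inE maxclique_sub_adj_multisun.
by case: (K \in D); rewrite ?andbF ?andbT.
Qed.

Lemma rim_order_sub_adj c' : rim_order (sub_adj adj D) c' <-> rim_order adj c'.
Proof.
by split; apply: rim_order_ext => K; rewrite rim_edge_sub_adj.
Qed.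

Lemma multisun_sub_adj : multisun (sub_adj adj D).
Proof.
case: adj_multisun => [[_ adj_irr] n_odd _ _ insc_nonconsec]; split => //.
- split => [x y|x]; last by rewrite /sub_adj adj_irr.
  rewrite /sub_adj multisun_sym; congr (_ && ~~ _).
  by apply/exists_inP/exists_inP => -[K KD /andP[xK yK]]; exists K; rewrite // xK yK.
- exact: (sub_adj_diamond_free multisun_sym multisun_diamond_free D_inscribed).
- by exists c; apply/rim_order_sub_adj.
- move=> K; rewrite inscribed_sub_adj => /setDP [KI _] u v uK vK uv.
  by rewrite rim_edge_sub_adj (insc_nonconsec K).
Qed.

(* A sub-multisun of [sub_adj adj D] deletes the cliques of [D :|: D'], which
   is again a proper nonempty part of [inscribed adj]. *)
Lemma sunoid_sub_adj : sunoid adj -> sub_choice adj D -> sunoid (sub_adj adj D).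
Proof.
move=> [_ adj_sunoid] [_ D0 DN]; split; first exact: multisun_sub_adj.
move=> c' /rim_order_sub_adj Hc'; have [_ HD] := adj_sunoid c' Hc'.
split; first exact: HD.
move=> D' [D'I _ D'N]; rewrite sub_adjU; apply: HD; split.
- by rewrite subUset D_inscribed (subset_trans D'I) // inscribed_sub_adj subsetDl.
- by apply: contraNneq D0 => /eqP; rewrite setU_eq0 => /andP[->].
- apply: contraNneq D'N => DD'; rewrite inscribed_sub_adj -DD'.
  apply/eqP/setP => K; rewrite !inE.
  case KD': (K \in D'); last by rewrite orbF andNb.
  rewrite orbT andbT.
  by have := subsetP D'I _ KD'; rewrite inscribed_sub_adj => /setDP[_ ->].
Qed.

End SubMultisun.

Definition cliques_at n (adj : rel 'I_n) (v : 'I_n) : {set {set 'I_n}} :=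
  [set K in inscribed adj | v \in K].

Section Labels.
Variables (n : nat) (adj : rel 'I_n) (name : {set 'I_n} -> nat) (v : 'I_n).

Lemma label_gt1 : 1 < #|cliques_at adj v| -> label adj name v = Sig.
Proof. by rewrite /label -/(cliques_at adj v) => ->. Qed.

Lemma label_set1 K : cliques_at adj v = [set K] -> label adj name v = Pl (name K).
Proof. by rewrite /label -/(cliques_at adj v) => ->; rewrite cards1 pick_set1. Qed.

Lemma label_set0 : cliques_at adj v = set0 -> label adj name v = Eps.
Proof.
rewrite /label -/(cliques_at adj v) => ->; rewrite cards0.
by case: pickP => // K; rewrite inE.
Qed.

Lemma label_proper m : label adj name v = Pl m ->
  exists2 K, K \in inscribed adj & m = name K.
Proof.
rewrite /label; case: ifP => // _; case: pickP => // K /setIdP[KI _] [<-].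
by exists K.
Qed.

End Labels.

Section CommonVertex.
Variables (n : nat) (adj : rel 'I_n) (c : 'I_n -> 'I_n) (name : {set 'I_n} -> nat)
  (xi : 'I_n).
Hypotheses (adj_multisun : multisun adj) (adj_rim : rim_order adj c)
  (adj_N3 : N3 adj xi) (name_inj : {in inscribed adj &, injective name}).

Lemma inscribed_card_gt2 K : K \in inscribed adj -> 2 < #|K|.
Proof.
rewrite inE => /andP[HK K2]; rewrite ltn_neqAle eq_sym K2.
exact: (maxclique_card_gt1 (Ordinal (rim_order_gt0 adj_rim)) (rim_cover adj_rim) HK).
Qed.

(* By N3 every vertex of [K] other than [xi] lies in no other inscribed
   clique, and [K] has such a vertex since it has at least three. *)
Lemma private_vertex K : K \in inscribed adj -> exists v, cliques_at adj v = [set K].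
Proof.
move=> KI; have : 0 < #|K :\ xi|.
  have := inscribed_card_gt2 KI; rewrite (cardsD1 xi K).
  by case: (xi \in K) => /ltnW; rewrite ?add1n ?add0n // => /ltnW.
case/card_gt0P => v /setD1P [vxi vK]; exists v.
apply/setP => K'; rewrite in_set in_set1; apply/andP/eqP => [[K'I vK']|->] //.
apply/eqP; apply: contraNT vxi => K'K.
by have /setP /(_ v) := adj_N3.2 _ _ K'I KI K'K; rewrite !inE vK vK' eq_sym.
Qed.

Lemma cliques_at_gt1 v : 1 < #|cliques_at adj v| -> cliques_at adj v = inscribed adj.
Proof.
case/card_gt1P => K1 [K2 [/setIdP[K1I vK1] /setIdP[K2I vK2] K12]].
have /setP /(_ v) := adj_N3.2 _ _ K1I K2I K12; rewrite !inE vK1 vK2 => /esym/eqP ->.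
apply/setP => K; rewrite in_set andb_idr //; exact: adj_N3.1.
Qed.

Definition clique_letters := [seq Pl (name K) | K <- enum (inscribed adj)].

Lemma uniq_clique_letters : uniq clique_letters.
Proof.
rewrite map_inj_in_uniq ?enum_uniq // => K1 K2; rewrite !mem_enum => K1I K2I [].
exact: name_inj.
Qed.

Lemma mem_wordG l : is_proper l -> (l \in wordG adj c name) = (l \in clique_letters).
Proof.
case: l => [[m|]|] //= _; apply/mapP/mapP => [[i _ /esym/label_proper [K KI ->]]|[K]].
  by exists K; rewrite ?mem_enum.
rewrite mem_enum => /private_vertex [v Hv] ->.
have [i Ev] := rim_order_surj adj_rim v.
by exists i; rewrite ?mem_enum // -Ev (label_set1 name Hv).
Qed.

Lemma proper_letters_approx w : approx (wordG adj c name) w ->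
  proper_letters w =i clique_letters.
Proof.
move=> Happ l; rewrite mem_undup mem_filter.
case lP: (is_proper l) => /=.
  by rewrite (mem_approx _ Happ) ?mem_wordG //; case: l lP => [[]|].
by apply/esym/negbTE; apply: contraFN lP => /mapP [K _ ->].
Qed.

Lemma nproper_approx w : approx (wordG adj c name) w -> nproper w = #|inscribed adj|.
Proof.
move/proper_letters_approx => PL.
rewrite /nproper (perm_size (uniq_perm (undup_uniq _) uniq_clique_letters PL)).
by rewrite size_map -cardE.
Qed.

Section Projection.
Variables (w X : seq letter).
Hypotheses (w_approx : approx (wordG adj c name) w) (X_uniq : uniq X)
  (X_proper : {subset X <= proper_letters w}) (X_small : size X < nproper w).

Definition named_cliques : {set {set 'I_n}} :=
  [set K in inscribed adj | Pl (name K) \in X].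

Lemma named_cliques_sub : named_cliques \subset inscribed adj.
Proof. by apply/subsetP => K /setIdP[]. Qed.

Lemma mem_X_clique_letters l : l \in X -> l \in clique_letters.
Proof. by move/X_proper; rewrite proper_letters_approx. Qed.

Lemma card_named_cliques : #|named_cliques| = size X.
Proof.
rewrite cardE -(size_map (fun K => Pl (name K))); apply/esym/perm_size/uniq_perm => //.
  rewrite map_inj_in_uniq ?enum_uniq // => K1 K2; rewrite !mem_enum.
  by move=> /setIdP[K1I _] /setIdP[K2I _] [] /name_inj; apply.
move=> l; apply/idP/mapP => [lX|[K]]; last by rewrite mem_enum => /setIdP[_ ?] ->.
have /mapP [K] := mem_X_clique_letters lX; rewrite mem_enum => KI El.
by exists K; rewrite // mem_enum inE KI -El.
Qed.

Lemma remaining_letter K0 : inscribed adj :\: named_cliques = [set K0] ->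
  head Eps [seq l <- proper_letters w | l \notin X] = Pl (name K0).
Proof.
move=> E0; have /setDP [K0I K0X] : K0 \in inscribed adj :\: named_cliques.
  by rewrite E0 set11.
rewrite inE K0I /= in K0X.
have only_K0 l : l \in [seq l <- proper_letters w | l \notin X] -> l = Pl (name K0).
  rewrite mem_filter proper_letters_approx // => /andP[lX /mapP [K]].
  rewrite mem_enum => KI El.
  have : K \in [set K0] by rewrite -E0 inE in_set KI -El lX.
  by rewrite inE El => /eqP ->.
have : Pl (name K0) \in [seq l <- proper_letters w | l \notin X].
  by rewrite mem_filter K0X proper_letters_approx //; apply: map_f; rewrite mem_enum.
by case: [seq l <- _ | _] only_K0 => // l s only_K0 _; apply: only_K0; rewrite mem_head.
Qed.

Lemma label_sub_adj v :
  label (sub_adj adj named_cliques) name v = proj_letter w X (label adj name v).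
Proof.
have S'E : cliques_at (sub_adj adj named_cliques) v = cliques_at adj v :\: named_cliques.
  rewrite /cliques_at (inscribed_sub_adj adj_multisun adj_rim named_cliques_sub).
  apply/setP => K; apply/setIdP/setDP => [[/setDP[KI KD] vK]|[/setIdP[KI vK] KD]].
    by split => //; apply/setIdP.
  by split => //; apply/setDP.
have [SigX EpsX] : Sig \notin X /\ Eps \notin X.
  by split; apply/negP => /mem_X_clique_letters /mapP [].
rewrite /proj_letter; case: (ltnP 1 #|cliques_at adj v|) => [S2|S1].
  rewrite (label_gt1 _ S2) (negbTE SigX) eqxx andbT.
  have : #|cliques_at (sub_adj adj named_cliques) v| = #|inscribed adj| - size X.
    by rewrite S'E cliques_at_gt1 // cardsD (setIidPr named_cliques_sub) card_named_cliques.
  rewrite -(nproper_approx w_approx); case: eqP => [Xp|Xp] S'card.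
    have /cards1P [K0 E0] : #|cliques_at (sub_adj adj named_cliques) v| == 1.
      by rewrite S'card Xp; case: (nproper w) X_small => // p _; rewrite subSn ?subnn.
    by rewrite (label_set1 _ E0) (remaining_letter (K0 := K0)) // -(cliques_at_gt1 S2) -S'E.
  have := X_small; rewrite (nproper_approx w_approx) => X_small'.
  by rewrite label_gt1 // S'card; lia.
have [S0|[K SK]] := set_0Vmem (cliques_at adj v).
  by rewrite (label_set0 _ S0) (negbTE EpsX) andbF label_set0 // S'E S0 set0D.
have S1K : cliques_at adj v = [set K] by apply/eqP; rewrite eq_sym eqEcard sub1set SK cards1.
have /setIdP [KI _] := SK; rewrite (label_set1 _ S1K).
have KD : (K \in named_cliques) = (Pl (name K) \in X) by rewrite inE KI.
case KX: (Pl (name K) \in X).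
  by rewrite label_set0 // S'E S1K; apply/eqP; rewrite setD_eq0 sub1set KD.
rewrite (@label_set1 _ _ _ _ K) ?andbF // S'E S1K.
by apply/setDidPl; rewrite disjoints1 KD KX.
Qed.

Lemma wordG_sub_adj c' :
  wordG (sub_adj adj named_cliques) c' name = map (proj_letter w X) (wordG adj c' name).
Proof. by rewrite /wordG -map_comp; apply: eq_map => i; rewrite /= label_sub_adj. Qed.

Lemma sub_choice_named_cliques : X != [::] -> sub_choice adj named_cliques.
Proof.
move=> X0; split; first exact: named_cliques_sub.
  by rewrite -card_gt0 card_named_cliques lt0n size_eq0.
apply: contraTneq X_small => DI.
by rewrite (nproper_approx w_approx) -card_named_cliques DI ltnn.
Qed.

End Projection.

End CommonVertex.

Theorem proposition3 (w : seq letter) (X : seq letter) :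
  is_sunword w ->
  2 <= nproper w ->
  uniq X ->
  {subset X <= proper_letters w} ->
  size X < nproper w ->
  is_sunword (proj w X).
Proof.
move=> [n [adj [c [name [adj_sunoid adj_rim name_inj w_approx]]]]] w2 X_uniq X_proper X_small.
have [->|X0] := eqVneq X [::]; first by rewrite proj_nil //; exists n, adj, c, name.
have [adj_multisun /(_ c adj_rim) [[_ _ [xi [adj_N3 _]] _] _]] := adj_sunoid.
set D := named_cliques adj name X.
have D_inscribed : D \subset inscribed adj by apply: named_cliques_sub.
have [m w_rot] := approx_map_rot (proj_letter_Eps X_proper) w_approx.
have adj'_rim : rim_order (sub_adj adj D) c.
  by apply/(rim_order_sub_adj adj_multisun adj_rim D_inscribed).
have [c' adj'_rim' wordG_c'] := rot_wordG name m adj'_rim.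
exists n, (sub_adj adj D), c', name; split => //.
- apply: (sunoid_sub_adj adj_multisun adj_rim D_inscribed adj_sunoid).
  exact: (sub_choice_named_cliques adj_rim adj_N3 name_inj w_approx X_uniq X_proper X_small X0).
- rewrite (inscribed_sub_adj adj_multisun adj_rim D_inscribed).
  by move=> K1 K2 /setDP[K1I _] /setDP[K2I _]; apply: name_inj.
by rewrite proj_map wordG_c'
  (wordG_sub_adj adj_multisun adj_rim adj_N3 name_inj w_approx X_uniq X_proper X_small).
Qed.
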